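(* Let $G$ be a torsion group and $M$ a finitely generated $\mathbb{B}[G]$-module. Then each orbit of the $G$-action on the poset of join-irreducible elements of $M$ forms an antichain; i.e. for each join-irreducible $v\in M$ and $g,h\in G$, $gv\le hv$ implies $gv=hv$.
   Context: $\mathbb{B}=\{0,1\}$ is the Boolean semifield with $1+1=1$; $\mathbb{B}[G]$ is the group semiring. A $\mathbb{B}$-module is partially ordered by $x\le y$ iff $x+y=y$ (sum is the join). An element $v$ is join-irreducible if $v\neq0$ and $v=a+b$ implies $v=a$ or $v=b$. A torsion group is one in which every element has finite order. *)

(* A B[G]-module is encoded as a commutative idempotent monoid
   (M, add, zero) -- i.e. a B-module -- with an action of the group G by
   B-module endomorphisms; B[G]-scalars (finite formal sums of group
   elements) then act by  (sum g_i) . x = sum (g_i . x). *)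
From Stdlib Require Import List.
Import ListNotations.

Definition is_group {G : Type} (mul : G -> G -> G) (one : G) (inv : G -> G) : Prop :=
  (forall a b c, mul a (mul b c) = mul (mul a b) c) /\
  (forall a, mul one a = a) /\ (forall a, mul a one = a) /\
  (forall a, mul (inv a) a = one) /\ (forall a, mul a (inv a) = one).

Fixpoint gpow {G : Type} (mul : G -> G -> G) (one : G) (g : G) (n : nat) : G :=
  match n with
  | O => one
  | S k => mul g (gpow mul one g k)
  end.

Definition is_torsion {G : Type} (mul : G -> G -> G) (one : G) : Prop :=
  forall g : G, exists n : nat, 0 < n /\ gpow mul one g n = one.

(* B-module: commutative monoid in which 1+1=1 forces x + x = x *)
Definition is_Bmodule {M : Type} (add : M -> M -> M) (zero : M) : Prop :=
  (forall x y z, add x (add y z) = add (add x y) z) /\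
  (forall x y, add x y = add y x) /\
  (forall x, add zero x = x) /\
  (forall x, add x x = x).

Definition is_BG_action {G M : Type} (mul : G -> G -> G) (one : G)
    (add : M -> M -> M) (zero : M) (act : G -> M -> M) : Prop :=
  (forall x, act one x = x) /\
  (forall g h x, act (mul g h) x = act g (act h x)) /\
  (forall g x y, act g (add x y) = add (act g x) (act g y)) /\
  (forall g, act g zero = zero).

Definition lin_comb {G M : Type} (add : M -> M -> M) (zero : M)
    (act : G -> M -> M) (l : list (G * M)) : M :=
  fold_right (fun p acc => add (act (fst p) (snd p)) acc) zero l.

Definition BG_fin_gen {G M : Type} (add : M -> M -> M) (zero : M)
    (act : G -> M -> M) : Prop :=
  exists gens : list M, forall x : M,
    exists l : list (G * M), (forall p, In p l -> In (snd p) gens) /\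
      x = lin_comb add zero act l.

Definition Ble {M : Type} (add : M -> M -> M) (x y : M) : Prop := add x y = y.

Definition join_irreducible {M : Type} (add : M -> M -> M) (zero : M) (v : M) : Prop :=
  v <> zero /\ forall a b, v = add a b -> v = a \/ v = b.

(* If [g v <= h v], translating by [g^-1] gives [v <= k v] for [k = g^-1 h].
   Since the action is by monotone maps, [v <= k v <= k^2 v <= ... <= k^n v],
   and [k^n = 1] for the order [n] of [k] closes the chain into a cycle, so
   [v = k v] by antisymmetry, i.e. [g v = h v]. *)
From Stdlib Require Import List.

Section Semilattice.

Variables (M : Type) (add : M -> M -> M).
Hypothesis add_assoc : forall x y z, add x (add y z) = add (add x y) z.
Hypothesis add_comm : forall x y, add x y = add y x.
Hypothesis add_idem : forall x, add x x = x.

Definition additive (f : M -> M) : Prop :=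
  forall x y, f (add x y) = add (f x) (f y).

Lemma Ble_refl (x : M) : Ble add x x.
Proof. apply add_idem. Qed.

Lemma Ble_trans (x y z : M) : Ble add x y -> Ble add y z -> Ble add x z.
Proof. unfold Ble; intros Hxy Hyz. rewrite <- Hyz, add_assoc, Hxy. reflexivity. Qed.

Lemma Ble_antisym (x y : M) : Ble add x y -> Ble add y x -> x = y.
Proof. unfold Ble; intros Hxy Hyx. rewrite <- Hxy, add_comm. symmetry; exact Hyx. Qed.

Lemma Ble_additive (f : M -> M) (x y : M) :
  additive f -> Ble add x y -> Ble add (f x) (f y).
Proof. unfold Ble; intros Hf Hxy. rewrite <- Hf, Hxy. reflexivity. Qed.

Lemma Ble_iter (f : M -> M) (v : M) :
  additive f -> Ble add v (f v) -> forall n, Ble add v (Nat.iter n f v).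
Proof.
  intros Hf Hv n; induction n as [|n IH]; simpl.
  - apply Ble_refl.
  - apply (Ble_trans _ (f v)); [exact Hv|].
    apply Ble_additive; assumption.
Qed.

Lemma periodic_additive_fixed (f : M -> M) (v : M) (n : nat) :
  additive f -> 0 < n -> Nat.iter n f v = v -> Ble add v (f v) -> f v = v.
Proof.
  intros Hf Hn Hper Hv.
  destruct n as [|m]; [inversion Hn|].
  apply Ble_antisym; [|exact Hv].
  rewrite <- Hper at 2; simpl.
  apply Ble_additive, Ble_iter; assumption.
Qed.

End Semilattice.

Section Action.

Variables (G M : Type) (mul : G -> G -> G) (one : G) (act : G -> M -> M).
Hypothesis act_one : forall x, act one x = x.
Hypothesis act_mul : forall g h x, act (mul g h) x = act g (act h x).

Lemma act_gpow (k : G) (n : nat) (x : M) :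
  act (gpow mul one k n) x = Nat.iter n (act k) x.
Proof.
  induction n as [|n IH]; simpl.
  - apply act_one.
  - rewrite act_mul, IH. reflexivity.
Qed.

End Action.

Theorem lemma4p11 (G M : Type) (mul : G -> G -> G) (one : G) (inv : G -> G)
    (add : M -> M -> M) (zero : M) (act : G -> M -> M) :
  is_group mul one inv ->
  is_torsion mul one ->
  is_Bmodule add zero ->
  is_BG_action mul one add zero act ->
  BG_fin_gen add zero act ->
  forall (v : M) (g h : G), join_irreducible add zero v ->
    Ble add (act g v) (act h v) -> act g v = act h v.
Proof.
  intros [mul_assoc [mul1g [_ [mulVg mulgV]]]] Htor [add_assoc [add_comm [_ add_idem]]]
    [act_one [act_mul [act_add _]]] _ v g h _ Hle.
  set (k := mul (inv g) h).
  assert (Hk : Ble add v (act k v)).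
  { unfold k; rewrite act_mul.
    rewrite <- (act_one v) at 1; rewrite <- (mulVg g), act_mul.
    apply Ble_additive; [exact (act_add _) | exact Hle]. }
  destruct (Htor k) as [n [Hn Hkn]].
  assert (Hfix : act k v = v).
  { apply (periodic_additive_fixed M add add_assoc add_comm add_idem _ _ n);
      [exact (act_add k) | exact Hn | | exact Hk].
    rewrite <- (act_gpow G M mul one act act_one act_mul), Hkn. apply act_one. }
  rewrite <- Hfix at 1. unfold k.
  rewrite <- act_mul, mul_assoc, mulgV, mul1g. reflexivity.
Qed.
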